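(* Let $\phi:\mathbb{R}^d\to\mathbb{R}$ be differentiable and suppose there exist constants $0<m\le M$ such that $$m\|x-y\|^2\le [\nabla\phi(x)-\nabla\phi(y)]^T(x-y)\le M\|x-y\|^2\quad\text{for all }x,y\in\mathbb{R}^d.$$ Let $g:\mathbb{R}^d\to\mathbb{R}^d$ be a map with $\|\nabla\phi(x)-g(x)\|\le\epsilon_g$ for all $x\in\mathbb{R}^d$, and let $f:\mathbb{R}^d\to\mathbb{R}$ satisfy $|\phi(x)-f(x)|\le\epsilon_f$ for all $x$, where $\epsilon_g>0$ and $\epsilon_f\ge 0$. Let $x_k\in\mathbb{R}^d$ and let $s_k\in\mathbb{R}^d$, $s_k\neq 0$, be chosen such that $$s_k^T\left[g(x_k+s_k)-g(x_k)\right]\ge c\,\epsilon_g\|s_k\|$$ for some constant $c>2$. Setting $y_k=g(x_k+s_k)-g(x_k)$, we have $$\frac{s_k^Ty_k}{s_k^Ts_k}\ge\frac{c}{c+2}\,m,\qquad \frac{y_k^Ty_k}{s_k^Ty_k}\le\frac{c}{c-2}\,M.$$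
   Context: $\|\cdot\|$ denotes the Euclidean norm. Here $f$ and $g$ model noisy observations of $\phi$ and $\nabla\phi$. *)

From HB Require Import structures.
From mathcomp Require Import all_boot all_order all_algebra.
From mathcomp Require Import all_classical all_reals all_analysis.
Set Implicit Arguments. Unset Strict Implicit. Unset Printing Implicit Defensive.
Import Order.TTheory GRing.Theory Num.Theory.
Import numFieldNormedType.Exports.
Local Open Scope ring_scope.

Definition dotv {R : realType} {d : nat} (u v : 'rV[R]_d) : R :=
  \sum_(i < d) u 0 i * v 0 i.

(* Euclidean norm (note: the library's `|.| on matrices is the sup norm) *)
Definition enorm {R : realType} {d : nat} (u : 'rV[R]_d) : R :=
  Num.sqrt (dotv u u).

Definition grad {R : realType} {d : nat} (phi : 'rV[R]_d -> R) (x : 'rV[R]_d)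
  : 'rV[R]_d :=
  \row_(i < d) ('d phi x (delta_mx 0 i : 'rV[R]_d)).

(* Let a = grad phi (x + s) - grad phi x be the exact gradient increment; the
   noisy increment y differs from it by at most 2 eps_g.  Strong monotonicity
   gives s'a >= m |s|^2, and the secant condition s'y >= c eps_g |s| makes the
   noise at most the fraction 2/c of s'y, whence the first bound.  For the
   second, the Bregman divergence D(x, v) of phi satisfies
   0 <= D(x, v) <= M/2 |v|^2; comparing phi at the gradient step x + v - a/M
   from both ends yields cocoercivity |a|^2 <= M s'a, i.e. a lies in the ball
   of radius M/2 |s| centred at M/2 s.  Hence y lies in that ball enlarged by
   2 eps_g, and the secant condition again absorbs the enlargement. *)

From mathcomp Require Import all_boot all_order all_algebra.
From mathcomp Require Import all_classical all_reals all_analysis.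
From mathcomp Require Import ring lra.
Set Implicit Arguments.
Unset Strict Implicit.
Unset Printing Implicit Defensive.
Import Order.TTheory GRing.Theory Num.Theory.
Import numFieldNormedType.Exports.
Local Open Scope ring_scope.

Section Euclidean.
Variables (R : realType) (d : nat).
Implicit Types u v w : 'rV[R]_d.

Lemma dotvC u v : dotv u v = dotv v u.
Proof. by apply: eq_bigr => i _; rewrite mulrC. Qed.

Lemma dotvDl u v w : dotv (u + v) w = dotv u w + dotv v w.
Proof. by rewrite /dotv -big_split; apply: eq_bigr => i _; rewrite !mxE mulrDl. Qed.

Lemma dotvZl a u v : dotv (a *: u) v = a * dotv u v.
Proof. by rewrite /dotv mulr_sumr; apply: eq_bigr => i _; rewrite !mxE mulrA. Qed.

Lemma dotvNl u v : dotv (- u) v = - dotv u v.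
Proof. by rewrite -scaleN1r dotvZl mulN1r. Qed.

Lemma dotvBl u v w : dotv (u - v) w = dotv u w - dotv v w.
Proof. by rewrite dotvDl dotvNl. Qed.

Lemma dotvDr u v w : dotv u (v + w) = dotv u v + dotv u w.
Proof. by rewrite dotvC dotvDl !(dotvC u). Qed.

Lemma dotvZr a u v : dotv u (a *: v) = a * dotv u v.
Proof. by rewrite dotvC dotvZl dotvC. Qed.

Lemma dotvNr u v : dotv u (- v) = - dotv u v.
Proof. by rewrite dotvC dotvNl dotvC. Qed.

Lemma dotvBr u v w : dotv u (v - w) = dotv u v - dotv u w.
Proof. by rewrite dotvDr dotvNr. Qed.

Lemma dotv0l v : dotv 0 v = 0.
Proof. by rewrite -(scale0r (0 : 'rV_d)) dotvZl mul0r. Qed.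

Lemma dotv0r u : dotv u 0 = 0.
Proof. by rewrite dotvC dotv0l. Qed.

Definition dotvE := (dotvDl, dotvBl, dotvNl, dotvZl, dotvDr, dotvBr, dotvNr, dotvZr).

Lemma dotvv_ge0 u : 0 <= dotv u u.
Proof. by apply: sumr_ge0 => i _; rewrite -expr2 sqr_ge0. Qed.

Lemma dotvv_eq0 u : (dotv u u == 0) = (u == 0).
Proof.
apply/idP/eqP => [|->]; last by rewrite /dotv big1 // => i _; rewrite mxE mul0r.
rewrite psumr_eq0 => [/allP u0|i _]; last by rewrite -expr2 sqr_ge0.
apply/rowP => i; have /u0 : i \in index_enum 'I_d by rewrite mem_index_enum.
by rewrite mxE mulf_eq0 orbb => /eqP.
Qed.

Lemma enorm_ge0 u : 0 <= enorm u.
Proof. exact: sqrtr_ge0. Qed.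

Lemma enorm_sqr u : enorm u ^+ 2 = dotv u u.
Proof. by rewrite sqr_sqrtr // dotvv_ge0. Qed.

Lemma enorm0 : enorm (0 : 'rV[R]_d) = 0.
Proof. by rewrite /enorm dotv0l sqrtr0. Qed.

Lemma enorm_eq0 u : (enorm u == 0) = (u == 0).
Proof. by rewrite -dotvv_eq0 -enorm_sqr sqrf_eq0. Qed.

Lemma enorm_gt0 u : (0 < enorm u) = (u != 0).
Proof. by rewrite lt0r enorm_ge0 enorm_eq0 andbT. Qed.

Lemma enormN u : enorm (- u) = enorm u.
Proof. by rewrite /enorm dotvNl dotvNr opprK. Qed.

Lemma cauchy_schwarz u v : dotv u v <= enorm u * enorm v.
Proof.
have [->|u0] := eqVneq u 0; first by rewrite dotv0l enorm0 mul0r.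
have [->|v0] := eqVneq v 0; first by rewrite dotv0r enorm0 mulr0.
have uv_gt0 : 0 < enorm u * enorm v by rewrite mulr_gt0 ?enorm_gt0.
have := dotvv_ge0 (enorm v *: u - enorm u *: v).
rewrite !dotvE -!enorm_sqr (dotvC v u); nra.
Qed.

Lemma ler_enormD u v : enorm (u + v) <= enorm u + enorm v.
Proof.
rewrite -(ler_pXn2r (_ : 0 < 2)%N) ?nnegrE ?addr_ge0 ?enorm_ge0 //.
rewrite enorm_sqr !dotvE -!enorm_sqr (dotvC v u).
have := cauchy_schwarz u v; nra.
Qed.
End Euclidean.

Section VectorBounds.
Variables (R : realType) (d : nat).
Implicit Types s a y u : 'rV[R]_d.

Lemma enorm_subZ_sqr u r s :
  enorm (u - r *: s) ^+ 2 = dotv u u - 2 * r * dotv s u + r ^+ 2 * dotv s s.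
Proof. by rewrite enorm_sqr !dotvE (dotvC u s); ring. Qed.

Lemma ler_enormBB u0 u1 v0 v1 :
  enorm ((u1 - u0) - (v1 - v0)) <= enorm (v1 - u1) + enorm (v0 - u0).
Proof.
have -> : (u1 - u0) - (v1 - v0) = (v0 - u0) + - (v1 - u1).
  by apply/rowP => i; rewrite !mxE; ring.
by rewrite addrC -(enormN (v1 - u1)); apply: ler_enormD.
Qed.

Lemma cocoercive_ball M s a : 0 <= M -> dotv a a <= M * dotv s a ->
  enorm (a - (M / 2) *: s) <= M / 2 * enorm s.
Proof.
move=> M0 coco; rewrite -(ler_pXn2r (_ : 0 < 2)%N) ?nnegrE ?enorm_ge0 //; last first.
  by rewrite mulr_ge0 ?divr_ge0 ?enorm_ge0.
rewrite enorm_subZ_sqr [X in _ <= X]exprMn enorm_sqr; nra.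
Qed.

Lemma secant_curvature_ge m c eps s a y :
  0 <= c -> s != 0 -> m * dotv s s <= dotv s a ->
  enorm (y - a) <= 2 * eps -> c * eps * enorm s <= dotv s y ->
  c / (c + 2) * m <= dotv s y / dotv s s.
Proof.
move=> c0 s0 strong noise sy.
have S0 : 0 < dotv s s by rewrite -enorm_sqr exprn_gt0 ?enorm_gt0.
have err : dotv s a - dotv s y <= 2 * eps * enorm s.
  rewrite -dotvBr; apply: le_trans (cauchy_schwarz _ _) _.
  by rewrite -opprB enormN mulrC ler_wpM2r ?enorm_ge0.
have key : c * m * dotv s s <= (c + 2) * dotv s y by nra.
have -> : c / (c + 2) * m = c * m / (c + 2) by rewrite mulrAC.
rewrite ler_pdivlMr // mulrAC ler_pdivrMr; lra.
Qed.

Lemma secant_ratio_le M c eps s a y :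
  0 <= M -> 2 < c -> 0 < eps -> s != 0 -> dotv a a <= M * dotv s a ->
  enorm (y - a) <= 2 * eps -> c * eps * enorm s <= dotv s y ->
  dotv y y / dotv s y <= c / (c - 2) * M.
Proof.
move=> M0 c2 eps0 s0 coco noise sy.
have S0 : 0 < enorm s by rewrite enorm_gt0.
have sy0 : 0 < dotv s y by apply: lt_le_trans sy; rewrite !mulr_gt0 //; lra.
have ball_a := cocoercive_ball M0 coco.
have ball_y : enorm (y - (M / 2) *: s) <= M / 2 * enorm s + 2 * eps.
  have -> : y - (M / 2) *: s = (a - (M / 2) *: s) + (y - a).
    by rewrite [RHS]addrC addrA subrK.
  by apply: le_trans (ler_enormD _ _) _; apply: lerD.
have sa : dotv s a <= M * enorm s ^+ 2.
  have := cauchy_schwarz s (a - (M / 2) *: s).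
  rewrite dotvBr dotvZr -enorm_sqr => cs.
  have := ler_wpM2l (enorm_ge0 s) ball_a; nra.
have sy_up : dotv s y <= M * enorm s ^+ 2 + 2 * eps * enorm s.
  have := cauchy_schwarz s (y - a); rewrite dotvBr.
  have := ler_wpM2l (enorm_ge0 s) noise; nra.
have yy : dotv y y <= M * dotv s y + 2 * M * eps * enorm s + 4 * eps ^+ 2.
  move: ball_y; rewrite -(ler_pXn2r (_ : 0 < 2)%N) ?nnegrE ?enorm_ge0 //; last first.
    by rewrite addr_ge0 ?mulr_ge0 ?divr_ge0 ?enorm_ge0 //; lra.
  rewrite enorm_subZ_sqr -(enorm_sqr s); nra.
have ce : (c - 2) * eps <= M * enorm s by nra.
have -> : c / (c - 2) * M = c * M / (c - 2) by rewrite mulrAC.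
rewrite ler_pdivrMr // mulrAC ler_pdivlMr; last lra.
have := ler_wpM2l M0 sy; have := ler_wpM2l (ltW eps0) ce.
have c2_ge0 : 0 <= c - 2 by lra.
have := ler_wpM2l c2_ge0 yy; nra.
Qed.

End VectorBounds.

Lemma diff_grad (R : realType) d (phi : 'rV[R]_d -> R) x v :
  'd phi x v = dotv (grad phi x) v.
Proof.
rewrite {1}(row_sum_delta v) linear_sum /dotv; apply: eq_bigr => i _.
by rewrite linearZ /= mxE mulrC.
Qed.

Lemma is_derive_grad (R : realType) d (phi : 'rV[R]_d -> R) x v t :
  differentiable phi (x + t *: v) ->
  is_derive t 1 (fun s : R => phi (x + s *: v)) (dotv (grad phi (x + t *: v)) v).
Proof.
move=> dphi.
have shiftE : (fun h : R => h^-1 *: (phi (x + (h *: 1 + t) *: v) - phi (x + t *: v)))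
   = (fun h => h^-1 *: (phi (h *: v + (x + t *: v)) - phi (x + t *: v))).
  apply/funext => h; congr (_ *: (phi _ - _)).
  by rewrite [h *: 1]mulr1 scalerDl addrCA addrC.
split; first by rewrite /derivable /= shiftE; exact: diff_derivable.
have -> : 'D_1 (fun s : R => phi (x + s *: v)) t = 'D_v phi (x + t *: v).
  by rewrite /derive /= shiftE.
by rewrite deriveE // diff_grad.
Qed.

Section QuadraticMVT.
Variable R : realType.
Local Open Scope classical_set_scope.

Lemma quadratic_mvt (h dh : R -> R) (k : R) :
  (forall t : R, is_derive t 1 h (dh t)) ->
  exists2 t : R, 0 < t < 1 & h 1 - h 0 - dh 0 - k = dh t - dh 0 - k * (2 * t).
Proof.
move=> hdh.
pose q := h - (dh 0 \*: id + k \*: (id * id) : R -> R).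
pose dq t := dh t - (dh 0 + k * (2 * t)).
have qdq (t : R) : is_derive t 1 q (dq t).
  apply: is_deriveB => //.
  by apply: is_derive_eq; rewrite /GRing.scale /= !mulr1; ring.
have qcont : {within `[0, 1], continuous q}.
  by apply: derivable_within_continuous => t _; case: (qdq t).
have [t] := MVT ltr01 (fun t _ => qdq t) qcont.
rewrite in_itv /= => t01 qmvt; exists t => //.
move: qmvt; rewrite /q /dq !fctE /= /GRing.scale /=; lra.
Qed.

End QuadraticMVT.

(* The gradient field G is kept abstract: besides being more general, this
   keeps unification from unfolding [grad], which is prohibitively expensive. *)
Section Bregman.
Variables (R : realType) (d : nat) (phi : 'rV[R]_d -> R) (G : 'rV[R]_d -> 'rV[R]_d).
Implicit Types (x v : 'rV[R]_d) (t : R).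
Hypothesis phi_grad : forall x v t,
  is_derive t 1 (fun s : R => phi (x + s *: v)) (dotv (G (x + t *: v)) v).

Definition bregman x v := phi (x + v) - phi x - dotv (G x) v.

Lemma bregman_mvt k x v : exists2 t, 0 < t < 1 &
  bregman x v - k = dotv (G (x + t *: v) - G x) v - k * (2 * t).
Proof.
have [t t01] := quadratic_mvt k (phi_grad x v).
rewrite /= scale1r scale0r addr0 -dotvBl => mvt.
by exists t.
Qed.

Hypothesis G_monotone : forall x y, 0 <= dotv (G x - G y) (x - y).
Variable M : R.
Hypothesis G_upper : forall x y, dotv (G x - G y) (x - y) <= M * enorm (x - y) ^+ 2.

Lemma bregman_ge0 x v : 0 <= bregman x v.
Proof.
have [t /andP[t0 _]] := bregman_mvt 0 x v; rewrite mul0r !subr0 => ->.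
have := G_monotone (x + t *: v) x.
have -> : x + t *: v - x = t *: v by rewrite addrC addKr.
by rewrite dotvZr pmulr_rge0.
Qed.

Lemma bregman_le x v : bregman x v <= M / 2 * dotv v v.
Proof.
have [t /andP[t0 _] mvt] := bregman_mvt (M / 2 * dotv v v) x v.
have := G_upper (x + t *: v) x.
have -> : x + t *: v - x = t *: v by rewrite addrC addKr.
rewrite dotvZr enorm_sqr dotvZl dotvZr => incr.
rewrite -subr_le0 mvt; nra.
Qed.

Hypothesis M_gt0 : 0 < M.

Lemma sqr_increment_le_bregman x v :
  dotv (G (x + v) - G x) (G (x + v) - G x) <= 2 * M * bregman x v.
Proof.
(* Compare phi at the gradient step x + v - w / M from x and from x + v. *)
set w := G (x + v) - G x.
have ww : M^-1 * dotv w w = M^-1 * dotv (G (x + v)) w - M^-1 * dotv (G x) w.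
  by rewrite {1}/w dotvBl mulrBr.
clearbody w.
have Mr : M * M^-1 = 1 by rewrite mulfV ?gt_eqF.
have lo := bregman_ge0 x (v - M^-1 *: w).
have up := bregman_le (x + v) (- (M^-1 *: w)).
rewrite /bregman addrA !dotvE in lo up; rewrite mulrN opprK in up.
have half : M / 2 * (M^-1 * (M^-1 * dotv w w)) = M^-1 * dotv w w / 2.
  by rewrite mulrAC !mulrA Mr mul1r.
have : M^-1 * dotv w w / 2 <= bregman x v by rewrite /bregman; lra.
move/(ler_wpM2l (ltW M_gt0)); rewrite !mulrA Mr mul1r; lra.
Qed.

Lemma increment_cocoercive x v :
  dotv (G (x + v) - G x) (G (x + v) - G x) <= M * dotv (G (x + v) - G x) v.
Proof.
have sum : bregman x v + bregman (x + v) (- v) = dotv (G (x + v) - G x) v.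
  by rewrite /bregman addrK dotvNr dotvBl; lra.
have fwd := sqr_increment_le_bregman x v.
have bwd := sqr_increment_le_bregman (x + v) (- v).
rewrite addrK -opprB dotvNl dotvNr opprK in bwd.
rewrite -sum; lra.
Qed.

End Bregman.

Theorem lemma3p1 (R : realType) (d : nat) (phi : 'rV[R]_d -> R)
  (f : 'rV[R]_d -> R) (g : 'rV[R]_d -> 'rV[R]_d)
  (m M eps_g eps_f c : R) (xk sk : 'rV[R]_d) :
  (forall x, differentiable phi x) ->
  0 < m -> m <= M ->
  (forall x y, m * enorm (x - y) ^+ 2 <= dotv (grad phi x - grad phi y) (x - y)) ->
  (forall x y, dotv (grad phi x - grad phi y) (x - y) <= M * enorm (x - y) ^+ 2) ->
  0 < eps_g -> 0 <= eps_f ->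
  (forall x, enorm (grad phi x - g x) <= eps_g) ->
  (forall x, `|phi x - f x| <= eps_f) ->
  2 < c ->
  sk != 0 ->
  c * eps_g * enorm sk <= dotv sk (g (xk + sk) - g xk) ->
  let yk := g (xk + sk) - g xk in
  c / (c + 2) * m <= dotv sk yk / dotv sk sk /\
  dotv yk yk / dotv sk yk <= c / (c - 2) * M.
Proof.
move=> phi_diff m_gt0 mM strong upper eps_gt0 _ grad_err _ c_gt2 sk_neq0 secant yk.
have phi_grad x v t := is_derive_grad (phi_diff (x + t *: v)).
have monotone x y : 0 <= dotv (grad phi x - grad phi y) (x - y).
  exact: le_trans (mulr_ge0 (ltW m_gt0) (sqr_ge0 _)) (strong x y).
have M_gt0 : 0 < M := lt_le_trans m_gt0 mM.
have coco := increment_cocoercive phi_grad monotone upper M_gt0 xk sk.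
have := strong (xk + sk) xk.
have -> : xk + sk - xk = sk by rewrite addrC addKr.
rewrite enorm_sqr dotvC => curv.
have noise : enorm (yk - (grad phi (xk + sk) - grad phi xk)) <= 2 * eps_g.
  apply: le_trans (ler_enormBB _ _ _ _) _.
  by rewrite mulr_natl mulr2n; apply: lerD.
split.
  by apply: secant_curvature_ge curv noise secant => //; lra.
by rewrite dotvC in coco; apply: secant_ratio_le coco noise secant => //; exact: ltW.
Qed.
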